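(* Let $(\Omega,\mathcal{F},P)$ be a probability space, $\mathcal{X}$ a measurable space, $X:\Omega\to\mathcal{X}$ measurable, $u:\mathcal{X}\to\mathbb{R}$ measurable with $\mathbb{E}[u(X)]$ finite, and $\beta\ge 0$. Let $\mathbb{E}_\beta[u(X)]$ denote the unique $v\in\mathbb{R}$ with $\mathbb{E}[(u(X)-v)^+]=(1+\beta)\mathbb{E}[(v-u(X))^+]$. Let $$\mathcal{Q}_\beta=\left\{Q:\ Q\ll P,\ \frac{\mathrm{d}Q}{\mathrm{d}P}=\frac{1_{D^c}+(1+\beta)1_D}{1+\beta P(D)}\text{ for some }D\in\mathcal{F}\right\}.$$ Then $$\mathbb{E}_\beta[u(X)]=\min_{Q\in\mathcal{Q}_\beta}\mathbb{E}^Q[u(X)],$$ and the minimum is attained at $Q^*$ with $\dfrac{\mathrm{d}Q^*}{\mathrm{d}P}=\dfrac{1_{D_X^c}+(1+\beta)1_{D_X}}{1+\beta P(D_X)}$, where $D_X=\{\omega: u(X(\omega))<\mathbb{E}_\beta[u(X)]\}$.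
   Context: $s^+=\max\{s,0\}$; $\mathbb{E}^Q$ denotes expectation under $Q$. *)

From HB Require Import structures.
From mathcomp Require Import all_boot all_order all_algebra.
From mathcomp Require Import all_classical all_reals all_analysis.
Set Implicit Arguments. Unset Strict Implicit. Unset Printing Implicit Defensive.
Import Order.TTheory GRing.Theory Num.Theory.
Local Open Scope classical_set_scope.
Local Open Scope ring_scope.

Definition pospart {R : realType} (s : R) : R := Num.max s 0.

Definition is_Ebeta d (Omega : measurableType d) (R : realType)
  (P : probability Omega R) (Y : Omega -> R) (beta v : R) : Prop :=
  (\int[P]_w (pospart (Y w - v))%:E = (1 + beta)%:E * \int[P]_w (pospart (v - Y w))%:E)%E.

Definition Ebeta d (Omega : measurableType d) (R : realType)
  (P : probability Omega R) (Y : Omega -> R) (beta : R) : R :=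
  xget 0 [set v | is_Ebeta P Y beta v].

Definition dens d (Omega : measurableType d) (R : realType)
  (P : probability Omega R) (beta : R) (D : set Omega) (w : Omega) : R :=
  (\1_(~` D) w + (1 + beta) * \1_D w) / (1 + beta * fine (P D)).

Definition has_density d (Omega : measurableType d) (R : realType)
  (P : probability Omega R) (Q : {measure set Omega -> \bar R}) (f : Omega -> R) : Prop :=
  forall A, measurable A -> Q A = (\int[P]_(w in A) (f w)%:E)%E.

Definition Qbeta d (Omega : measurableType d) (R : realType)
  (P : probability Omega R) (beta : R) : set {measure set Omega -> \bar R} :=
  [set Q : {measure set Omega -> \bar R} | Q `<< P /\ exists D, measurable D /\ has_density P Q (dens P beta D)].

From HB Require Import structures.
From mathcomp Require Import all_boot all_order all_algebra.
From mathcomp Require Import all_classical all_reals all_analysis.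
From mathcomp Require Import measurable_realfun ring lra.
Import Order.TTheory GRing.Theory Num.Theory.
Import numFieldNormedType.Exports.
Local Open Scope classical_set_scope.
Local Open Scope ring_scope.

(* Write Y = u(X) and v = E_beta[Y].  Since (Y - v)^+ = (Y - v) + (v - Y)^+, the
   defining equation of v reads E[Y] - v = beta E[(v - Y)^+].  The right-hand side
   is a continuous function of v, so a solution exists by the intermediate value
   theorem.  For the density f_D of a measure in Q_beta this equation gives
     E[Y f_D] - v = beta / (1 + beta P(D)) * E[(v - Y)^+ - (v - Y) 1_D],
   whose integrand is nonnegative and vanishes identically for D = {Y < v}.  A
   measure with density f_D agrees with the mixture of the restrictions of P to
   D^c and D with weights 1 and 1 + beta, normalized, which yields the change of
   measure E^Q[Y] = E[Y f_D]. *)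

Section pospart.
Context {R : realType}.
Implicit Types s t : R.

Lemma pospartE s : pospart s = s * (0 < s)%R%:R.
Proof.
by rewrite /pospart; have [s0|s0] := ltP 0 s; rewrite ?mulr1 ?mulr0.
Qed.

Lemma pospart_ge0 s : 0 <= pospart s.
Proof. by rewrite pospartE; have [s0|s0] := ltP 0 s; rewrite /=; lra. Qed.

Lemma pospart_opp s : pospart (- s) = pospart s - s.
Proof. by rewrite !pospartE oppr_gt0; have [s0|s0|<-] := ltrgtP 0 s; rewrite /=; lra. Qed.

Lemma ler_mulb_pospart s (b : bool) : s * b%:R <= pospart s.
Proof. by rewrite pospartE; case: b; have [s0|s0] := ltP 0 s; rewrite /=; lra. Qed.

Lemma pospart_lipschitz s t : `|pospart s - pospart t| <= `|s - t|.
Proof.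
rewrite !pospartE ler_normr !ler_norml.
by have [s0|s0] := ltP 0 s; have [t0|t0] := ltP 0 t; rewrite /=; lra.
Qed.

End pospart.

Section restriction_mixture.
Local Open Scope ereal_scope.
Context {d} {T : measurableType d} {R : realType}.
Variable mu : {measure set T -> \bar R}.

Lemma ge0_integral_mrestr (F : set T) (mF : measurable F) (h : T -> \bar R) :
  measurable_fun setT h -> (forall x, 0 <= h x) ->
  \int[mrestr mu mF]_x h x = \int[mu]_x (h x * (\1_F x)%:E).
Proof.
move=> mh h0; transitivity (\int[mu]_(x in F) h x); last first.
  by rewrite integral_mkcond; apply: eq_integral => x _; rewrite epatch_indic.
rewrite [RHS](eq_measure_integral (mrestr mu mF)); last first.
  by move=> A mA AF; change (mu A = mu (A `&` F)); rewrite setIidl.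
rewrite -(setUv F) ge0_integral_setU//; last 3 first.
- exact: measurableC.
- by rewrite setUv.
- by rewrite disj_set2E setICr.
rewrite [X in _ + X](eq_measure_integral mzero).
  by rewrite integral_measure_zero adde0.
move=> A mA AFc; change (mu (A `&` F) = 0); suff -> : A `&` F = set0 by rewrite measure0.
by apply/seteqP; split => // x [/AFc].
Qed.

Variables (D : set T) (mD : measurable D) (a b : {nonneg R}).

Definition restr_mix : {measure set T -> \bar R} :=
  measure_add (mscale a (mrestr mu (measurableC mD))) (mscale b (mrestr mu mD)).

Lemma ge0_integral_restr_mix (h : T -> \bar R) :
  measurable_fun setT h -> (forall x, 0 <= h x) ->
  \int[restr_mix]_x h x =
  \int[mu]_x (h x * (a%:num * \1_(~` D) x + b%:num * \1_D x)%:E).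
Proof.
move=> mh h0; have mDc := measurableC mD.
have mhI (F : set T) : measurable F ->
    measurable_fun setT (fun x => h x * (\1_F x)%:E).
  by move=> mF; apply: emeasurable_funM => //; apply/measurable_EFinP/measurable_indic.
have hI0 (F : set T) x : 0 <= h x * (\1_F x)%:E by rewrite mule_ge0 ?lee_fin.
rewrite ge0_integral_measure_add; [|by []|by move=> x _; exact: h0|exact: mh].
rewrite !(ge0_integral_mscale _ measurableT) //.
rewrite !(ge0_integral_mrestr _ _ _ mh h0).
rewrite -!ge0_integralZl_EFin //; [|exact: mhI..].
rewrite -ge0_integralD //; last 4 first.
- by move=> x _; rewrite mule_ge0.
- exact/measurable_funeM/mhI.
- by move=> x _; rewrite mule_ge0.
- exact/measurable_funeM/mhI.
apply: eq_integral => x _; rewrite EFinD !EFinM ge0_muleDr ?mule_ge0 ?lee_fin //.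
by congr (_ + _); rewrite muleCA.
Qed.

Lemma restr_mix_dominates : restr_mix `<< mu.
Proof.
apply/null_content_dominatesP => A mA muA0.
have muIA0 (F : set T) : measurable F -> mu (A `&` F) = 0.
  by move=> mF; apply: (subset_measure0 (measurableI _ _ mA mF) mA) => // x [].
rewrite /= /measure_add /msum !big_ord_recl big_ord0 /= /mscale /= /mrestr.
by rewrite !muIA0 ?mule0 ?adde0 //; exact: measurableC.
Qed.

Lemma restr_mixE (A : set T) : measurable A ->
  restr_mix A = \int[mu]_(x in A) (a%:num * \1_(~` D) x + b%:num * \1_D x)%:E.
Proof.
move=> mA; transitivity (\int[restr_mix]_x (\1_A x)%:E).
  by rewrite integral_indic // setIT.
rewrite ge0_integral_restr_mix //; last exact/measurable_EFinP/measurable_indic.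
rewrite [RHS]integral_mkcond; apply: eq_integral => x _.
by rewrite epatch_indic muleC.
Qed.

End restriction_mixture.
Arguments restr_mix {d T R} mu {D} mD a b.

Section integral_density.
Local Open Scope ereal_scope.
Context {d} {T : measurableType d} {R : realType}.
Variables (mu nu : {measure set T -> \bar R}) (f : T -> R).
Hypothesis f_ge0 : forall x, (0 <= f x)%R.
Hypothesis ge0_integral_density : forall h : T -> \bar R,
  measurable_fun setT h -> (forall x, 0 <= h x) ->
  \int[nu]_x h x = \int[mu]_x (h x * (f x)%:E).

Lemma integral_density_EFin (Y : T -> R) : measurable_fun setT Y ->
  \int[nu]_x (Y x)%:E = \int[mu]_x (Y x * f x)%:E.
Proof.
move=> mY; have mYE : measurable_fun setT (EFin \o Y) by exact/measurable_EFinP.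
have maxe_mulr (y : R) x : maxe (y * f x)%:E 0 = maxe y%:E 0 * (f x)%:E.
  by rewrite muleC maxe_pMr ?lee_fin // mule0 -EFinM mulrC.
rewrite integralE [RHS]integralE !ge0_integral_density; last 4 first.
- exact: measurable_funeneg.
- by move=> x; rewrite funeneg_ge0.
- exact: measurable_funepos.
- by move=> x; rewrite funepos_ge0.
congr (_ - _); apply: eq_integral => x _; rewrite !(funeposE, funenegE) /=.
  by rewrite maxe_mulr.
by rewrite -mulNr maxe_mulr.
Qed.

End integral_density.

Lemma EFin_Rintegral d (T : measurableType d) (R : realType)
    (mu : {measure set T -> \bar R}) (f : T -> R) :
  mu.-integrable setT (EFin \o f) -> (\int[mu]_x f x)%:E = (\int[mu]_x (f x)%:E)%E.
Proof. by move=> intf; rewrite fineK // integrable_fin_num. Qed.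

Section dens_measure.
Context {d} {Omega : measurableType d} {R : realType} (P : probability Omega R).
Context {beta : R} (beta_ge0 : 0 <= beta).
Implicit Types D : set Omega.

Lemma dens_normalizer_ge0 D : 0 <= (1 + beta * fine (P D))^-1.
Proof. by rewrite invr_ge0 addr_ge0 // mulr_ge0 // fine_ge0. Qed.

Lemma dens_normalizerD_ge0 D : 0 <= (1 + beta) * (1 + beta * fine (P D))^-1.
Proof. by rewrite mulr_ge0 ?dens_normalizer_ge0 // addr_ge0. Qed.

Definition dens_measure {D} (mD : measurable D) : {measure set Omega -> \bar R} :=
  restr_mix P mD (NngNum (dens_normalizer_ge0 D)) (NngNum (dens_normalizerD_ge0 D)).

Lemma dens_mixE D x : dens P beta D x =
  (1 + beta * fine (P D))^-1 * \1_(~` D) x +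
  (1 + beta) * (1 + beta * fine (P D))^-1 * \1_D x.
Proof. by rewrite /dens mulrDl mulrC [in RHS]mulrAC. Qed.

Lemma densE D x :
  dens P beta D x = (1 + beta * \1_D x) / (1 + beta * fine (P D)).
Proof. by rewrite /dens !indicE in_setC; case: (x \in D) => /=; congr (_ / _); lra. Qed.

Lemma dens_ge0 D x : 0 <= dens P beta D x.
Proof.
by rewrite dens_mixE addr_ge0 // mulr_ge0 ?dens_normalizer_ge0 ?dens_normalizerD_ge0.
Qed.

Lemma dens_le D x : dens P beta D x <= 1 + beta.
Proof.
have p_ge0 : 0 <= fine (P D) by rewrite fine_ge0.
rewrite densE ler_pdivrMr ?ltr_pwDl ?mulr_ge0 //.
have le1 : 1 <= 1 + beta * fine (P D) by rewrite lerDl mulr_ge0.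
apply: le_trans (ler_peMr (addr_ge0 ler01 beta_ge0) le1).
by rewrite lerD2l ler_piMr // indicE lern1 leq_b1.
Qed.

Lemma bounded_dens D : [bounded dens P beta D x | x in setT].
Proof.
exists (1 + beta); split; first exact: num_real.
move=> M /ltW leM x _ /=; rewrite ger0_norm ?dens_ge0 //.
exact: le_trans (dens_le D x) leM.
Qed.

Lemma measurable_dens D : measurable D -> measurable_fun setT (dens P beta D).
Proof.
move=> mD; apply: measurable_funM => //; apply: measurable_funD.
  exact/measurable_indic/measurableC.
by apply: measurable_funM => //; exact: measurable_indic.
Qed.

Lemma integrable_dens D : measurable D -> P.-integrable setT (EFin \o dens P beta D).
Proof.
move=> mD; apply: measurable_bounded_integrable => //; last exact: bounded_dens.
  by rewrite fin_num_fun_lty // fin_num_measure.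
exact: measurable_dens.
Qed.

Lemma Rintegral_dens D : measurable D -> \int[P]_x dens P beta D x = 1.
Proof.
move=> mD; have P1D : 0 < 1 + beta * fine (P D).
  by rewrite ltr_pwDl // mulr_ge0 // fine_ge0.
have iD : P.-integrable setT (EFin \o \1_D) := integrable_indic P mD.
have i1 : P.-integrable setT (EFin \o cst 1).
  exact: finite_measure_integrable_cst.
under eq_Rintegral do rewrite densE.
rewrite RintegralZr //; last exact: integrableD i1 (integrableZl measurableT beta iD).
rewrite RintegralD //; last exact: (integrableZl measurableT beta iD).
have P1 : fine (P setT) = 1 by rewrite probability_setT.
have PD : \int[P]_x \1_D x = fine (P D) by rewrite /Rintegral integral_indic // setIT.
by rewrite RintegralZl // Rintegral_cst // P1 PD mul1r divff // gt_eqF.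
Qed.

Lemma dens_measure_has_density {D} (mD : measurable D) :
  has_density P (dens_measure mD) (dens P beta D).
Proof.
by move=> A mA; rewrite restr_mixE //; apply: eq_integral => x _; rewrite dens_mixE.
Qed.

Lemma dens_measure_in_Qbeta {D} (mD : measurable D) : dens_measure mD \in Qbeta P beta.
Proof.
rewrite inE; split; first exact: restr_mix_dominates.
by exists D; split => //; exact: dens_measure_has_density.
Qed.

Lemma integrable_mul_dens D (Y : Omega -> R) : measurable D ->
  P.-integrable setT (EFin \o Y) ->
  P.-integrable setT (EFin \o (fun x => Y x * dens P beta D x)).
Proof.
move=> mD intY.
have := integrableMl measurableT intY (measurable_dens _ mD) (bounded_dens D).
by apply: eq_integrable.
Qed.

Lemma integral_has_density {D} {Q : {measure set Omega -> \bar R}} {Y : Omega -> R} :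
  measurable D -> has_density P Q (dens P beta D) -> P.-integrable setT (EFin \o Y) ->
  (\int[Q]_x (Y x)%:E = (\int[P]_x (Y x * dens P beta D x))%:E)%E.
Proof.
move=> mD QD intY; rewrite EFin_Rintegral ?integrable_mul_dens //.
rewrite (eq_measure_integral (dens_measure mD)); last first.
  by move=> A mA _; rewrite QD // dens_measure_has_density.
apply: integral_density_EFin => [x|h mh h0|]; first exact: dens_ge0.
  by rewrite ge0_integral_restr_mix //; apply: eq_integral => x _; rewrite dens_mixE.
exact/measurable_EFinP/(measurable_int P intY).
Qed.

End dens_measure.

Section Ebeta.
Context {d} {Omega : measurableType d} {R : realType} (P : probability Omega R).
Variables (Y : Omega -> R) (beta : R).
Hypotheses (beta_ge0 : 0 <= beta) (intY : P.-integrable setT (EFin \o Y)).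

Definition lower_partial_moment v := \int[P]_w pospart (v - Y w).

Let P1 : fine (P setT) = 1. Proof. by rewrite probability_setT. Qed.

Let intYB v : P.-integrable setT (EFin \o (fun w => Y w - v)).
Proof.
have := integrableB measurableT intY (finite_measure_integrable_cst P v measurableT).
by apply: eq_integrable.
Qed.

Let intBY v : P.-integrable setT (EFin \o (fun w => v - Y w)).
Proof.
have := integrableB measurableT (finite_measure_integrable_cst P v measurableT) intY.
by apply: eq_integrable.
Qed.

Let int_pospart v : P.-integrable setT (EFin \o (fun w => pospart (v - Y w))).
Proof.
exact: (integrable_funrpos (f := fun w => v - Y w) measurableT (intBY v)).
Qed.

Lemma Rintegral_sub_lower_partial_moment v : \int[P]_w (Y w - v - beta * pospart (v - Y w)) =
  \int[P]_w Y w - v - beta * lower_partial_moment v.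
Proof.
rewrite RintegralB //; last exact: (integrableZl measurableT beta (int_pospart v)).
rewrite RintegralB //; last exact: finite_measure_integrable_cst.
by rewrite RintegralZl // Rintegral_cst // P1 mulr1.
Qed.

Lemma is_EbetaP v :
  is_Ebeta P Y beta v <-> \int[P]_w Y w - v = beta * lower_partial_moment v.
Proof.
have upper : \int[P]_w pospart (Y w - v) =
    \int[P]_w (Y w - v) + lower_partial_moment v.
  rewrite -RintegralD //; apply: eq_Rintegral => w _.
  by rewrite -(opprB (Y w)) pospart_opp; lra.
rewrite /is_Ebeta -!EFin_Rintegral //; last first.
  exact: (integrable_funrpos (f := fun w => Y w - v) measurableT).
rewrite -EFinM upper RintegralB //; last exact: finite_measure_integrable_cst.
rewrite Rintegral_cst // P1 mulr1 -/(lower_partial_moment v).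
by split => [[]|h]; [lra|congr EFin; lra].
Qed.

Lemma lower_partial_moment_lipschitz s t :
  `|lower_partial_moment s - lower_partial_moment t| <= `|s - t|.
Proof.
rewrite /lower_partial_moment -RintegralB //.
have intB : P.-integrable setT
    (EFin \o (fun w => pospart (s - Y w) - pospart (t - Y w))).
  have := integrableB measurableT (int_pospart s) (int_pospart t).
  by apply: eq_integrable.
apply: le_trans (le_normr_Rintegral measurableT intB) _.
apply: le_trans (_ : _ <= \int[P]_w `|s - t|) _; last by rewrite Rintegral_cst // P1 mulr1.
apply: le_Rintegral => //; [exact: integrable_norm|exact: finite_measure_integrable_cst|].
by move=> w _; rewrite (le_trans (pospart_lipschitz _ _)) // opprB addrA subrK.
Qed.

Lemma continuous_lower_partial_moment : continuous lower_partial_moment.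
Proof.
move=> s; apply/cvgrPdist_lt => e e0; near=> t.
apply: le_lt_trans (lower_partial_moment_lipschitz s t) _.
by near: t; exists e.
Unshelve. all: by end_near. Qed.

Lemma exists_is_Ebeta : exists v, is_Ebeta P Y beta v.
Proof.
pose G v := \int[P]_w Y w - v - beta * lower_partial_moment v.
have cG : continuous G.
  move=> s; apply: cvgB; first exact: cvgB (cvg_cst _) cvg_id.
  exact: cvgMr (continuous_lower_partial_moment s).
pose EY := \int[P]_w Y w; pose m := \int[P]_w `|Y w|.
have lpm_ge0 v : 0 <= lower_partial_moment v.
  by apply: Rintegral_ge0 => w _; exact: pospart_ge0.
have m_ge0 : 0 <= m by apply: Rintegral_ge0.
have /ler_normlP[EY_ge _] : `|EY| <= m := le_normr_Rintegral measurableT intY.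
have GEY : G EY <= 0 by rewrite /G subrr sub0r oppr_le0 mulr_ge0.
have bm_ge0 : 0 <= beta * m by rewrite mulr_ge0.
have [v0 v0E] : exists v0, v0 = - m - beta * m by eexists.
have lpm_v0 : lower_partial_moment v0 <= m.
  apply: le_Rintegral => //; [exact: integrable_norm|move=> w _].
  have := normr_ge0 (Y w); have : - Y w <= `|Y w| by rewrite -normrN ler_norm.
  have : v0 <= 0 by lra.
  by rewrite pospartE; have [|] := ltP 0 (v0 - Y w); rewrite /=; lra.
have Gv0 : 0 <= G v0.
  have : beta * lower_partial_moment v0 <= beta * m by rewrite ler_wpM2l.
  by rewrite /G -/EY; lra.
have v0EY : v0 <= EY by lra.
have [|c _ Gc] := IVT v0EY (continuous_subspaceT cG) (v := 0).
  by rewrite ge_min le_max GEY Gv0 !orbT.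
by exists c; apply/is_EbetaP; move: Gc; rewrite /G; lra.
Qed.

Lemma is_Ebeta_Ebeta : is_Ebeta P Y beta (Ebeta P Y beta).
Proof. exact: (xgetPex 0 exists_is_Ebeta). Qed.

Section Ebeta_dens.
Variable v : R.
Hypothesis Ev : is_Ebeta P Y beta v.

Lemma Rintegral_mul_dens D : measurable D ->
  \int[P]_w (Y w * dens P beta D w) = v + \int[P]_w
    (beta / (1 + beta * fine (P D)) * (pospart (v - Y w) - (v - Y w) * \1_D w)).
Proof.
move=> mD; set c := (1 + beta * fine (P D))^-1.
pose G w := v * dens P beta D w + c * (Y w - v - beta * pospart (v - Y w)).
pose E w :=
  beta / (1 + beta * fine (P D)) * (pospart (v - Y w) - (v - Y w) * \1_D w).
have YdE w : Y w * dens P beta D w = G w + E w by rewrite /G /E densE -/c; ring.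
have intd : P.-integrable setT (EFin \o dens P beta D) by exact: integrable_dens.
have intYd : P.-integrable setT (EFin \o (fun w => Y w * dens P beta D w)).
  exact: integrable_mul_dens.
have intgap : P.-integrable setT
    (EFin \o (fun w => Y w - v - beta * pospart (v - Y w))).
  have := integrableB measurableT (intYB v)
    (integrableZl measurableT beta (int_pospart v)).
  by apply: eq_integrable.
have intG : P.-integrable setT (EFin \o G).
  have := integrableD measurableT (integrableZl measurableT v intd)
    (integrableZl measurableT c intgap).
  by apply: eq_integrable.
have intE : P.-integrable setT (EFin \o E).
  have := integrableB measurableT intYd intG.
  by apply: eq_integrable => // w _; rewrite /= YdE -EFinD addrAC subrr add0r.
have RG : \int[P]_w G w = v.
  rewrite RintegralD //; last 2 first.
  - exact: (integrableZl measurableT v intd).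
  - exact: (integrableZl measurableT c intgap).
  rewrite !RintegralZl // Rintegral_dens // Rintegral_sub_lower_partial_moment.
  by move/is_EbetaP : Ev => ->; rewrite subrr mulr0 mulr1 addr0.
transitivity (\int[P]_w (G w + E w)); first by apply: eq_Rintegral => w _.
by rewrite RintegralD // RG.
Qed.

Lemma le_Rintegral_mul_dens D : measurable D ->
  v <= \int[P]_w (Y w * dens P beta D w).
Proof.
move=> mD; rewrite Rintegral_mul_dens // lerDl; apply: Rintegral_ge0 => w _.
have p_ge0 : 0 <= fine (P D) by rewrite fine_ge0.
apply: mulr_ge0; first by rewrite divr_ge0 // addr_ge0 // mulr_ge0.
by rewrite subr_ge0 indicE ler_mulb_pospart.
Qed.

Lemma Rintegral_mul_dens_lt : measurable [set w | Y w < v] ->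
  \int[P]_w (Y w * dens P beta [set w | Y w < v] w) = v.
Proof.
move=> mDX; rewrite Rintegral_mul_dens // -[RHS]addr0; congr (_ + _).
transitivity (\int[P]_w (0 : R)); last by rewrite Rintegral_cst // mul0r.
apply: eq_Rintegral => w _.
rewrite indicE (_ : w \in _ = (0 < v - Y w)) -?pospartE ?subrr ?mulr0 //.
by rewrite subr_gt0; apply/idP/idP; rewrite in_setE.
Qed.

End Ebeta_dens.

End Ebeta.

Theorem theorem3 (d : measure_display) (Omega : measurableType d) (R : realType)
  (P : probability Omega R)
  (dX : measure_display) (Xsp : measurableType dX) (X : Omega -> Xsp) (u : Xsp -> R)
  (beta : R) :
  measurable_fun setT X -> measurable_fun setT u ->
  P.-integrable setT (fun w => (u (X w))%:E) ->
  0 <= beta ->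
  let v := Ebeta P (fun w => u (X w)) beta in
  let DX := [set w | u (X w) < v] in
  (forall Q, Q \in Qbeta P beta -> (v%:E <= \int[Q]_w (u (X w))%:E)%E) /\
  (exists Qstar : {measure set Omega -> \bar R},
      Qstar \in Qbeta P beta /\
      has_density P Qstar (dens P beta DX) /\
      (\int[Qstar]_w (u (X w))%:E = v%:E)%E).
Proof.
move=> mX mu intY beta_ge0 v DX.
have Ev : is_Ebeta P (fun w => u (X w)) beta v by exact: is_Ebeta_Ebeta.
have mDX : measurable DX.
  have := measurable_fun_ltr (measurableT_comp mu mX) (measurable_cst v) measurableT.
  by move=> /(_ [set true] I); rewrite setTI.
split=> [Q|].
  rewrite inE => -[_ [D [mD QD]]].
  rewrite (integral_has_density P beta_ge0 mD QD intY) lee_fin.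
  exact: le_Rintegral_mul_dens.
exists (dens_measure P beta_ge0 mDX); split; first exact: dens_measure_in_Qbeta.
split; first exact: dens_measure_has_density.
rewrite (integral_has_density P beta_ge0 mDX (dens_measure_has_density P beta_ge0 mDX) intY).
by rewrite Rintegral_mul_dens_lt.
Qed.
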